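(* Let $(M,\mathcal F,D,g)$ be a foliated Hessian structure of constant normal Hessian sectional curvature $c$. Then the foliated Riemannian manifold $(M,\mathcal F,g)$ is modeled on a space form of constant sectional curvature $-\frac c4$, i.e. the normal Riemannian metric $g$ (equivalently the induced transverse metric) has constant sectional curvature $-\frac c4$.
   Context: $N(M,\mathcal F)=TM/T\mathcal F$. Foliated Hessian structure $(D,g)$: $D$ a flat torsion-free foliated connection in the normal bundle (adapted foliated affine coordinates $(x,y)$: adapted charts with affine transverse coordinate changes and $\overline{\partial/\partial y^i}$ $D$-parallel), $g$ a foliated Riemannian metric in the normal bundle with locally $g_{ij}=\partial^2h/\partial y^i\partial y^j$ for a function $h$ of $y$ only. $\gamma=\nabla-D$ with $\nabla$ the normal Levi-Civita connection of $g$; $Q=D\gamma$, $Q^i_{jkl}=\partial\gamma^i_{jl}/\partial y^k$, indices raised/lowered by $g$. $\hat Q(\xi)^{ik}=Q^i{}_j{}^k{}_l\xi^{jl}$ on symmetric contravariant normal 2-tensors $\xi$; the normal Hessian sectional curvature is $q(\xi)=\langle\hat Q(\xi),\xi\rangle/\langle\xi,\xi\rangle$, inner product induced by $g$; constant $c$ means $q\equiv c$. *)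

(* Local (adapted-chart) formalization of the
   transverse geometry of a foliated Hessian structure. *)
From HB Require Import structures.
From mathcomp Require Import all_boot all_order all_algebra.
From mathcomp Require Import all_classical all_reals all_analysis.
Set Implicit Arguments. Unset Strict Implicit. Unset Printing Implicit Defensive.
Import Order.TTheory GRing.Theory Num.Theory.
Import numFieldNormedType.Exports.
Local Open Scope ring_scope.
Local Open Scope classical_set_scope.

Section Transverse.
Variables (R : realType) (q : nat).
Notation V := 'rV[R]_q.

Definition ecoord (i : 'I_q) : V := delta_mx 0 i.

Definition pd (i : 'I_q) (f : V -> R) : V -> R := fun y => 'D_(ecoord i) f y.

Definition iter_pd (s : seq 'I_q) (f : V -> R) : V -> R := foldr pd f s.

Definition smooth_on (U : set V) (f : V -> R) : Prop :=
  forall (s : seq 'I_q) (y : V), U y -> differentiable (iter_pd s f) y.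

Variable h : V -> R.

(* metric coefficients g_ij = d^2 h / dy^i dy^j *)
Definition gco (i j : 'I_q) : V -> R := pd i (pd j h).
Definition gmx (y : V) : 'M[R]_q := \matrix_(i, j) gco i j y.
Definition ginv (y : V) : 'M[R]_q := invmx (gmx y).

Definition pos_def_on (U : set V) : Prop :=
  forall y, U y -> forall x : V, x != 0 ->
    0 < \sum_(i < q) \sum_(j < q) x 0 i * gco i j y * x 0 j.

(* Christoffel symbols Gamma^i_{jk} of the normal Levi-Civita connection;
   since D has vanishing Christoffel symbols in the affine coordinates y,
   these are also the components gamma^i_{jk} of gamma = nabla - D. *)
Definition gam (i j k : 'I_q) : V -> R := fun y =>
  2^-1 * \sum_(l < q) ginv y i l *
     (pd j (gco l k) y + pd k (gco l j) y - pd l (gco j k) y).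

Definition Qco (i j k l : 'I_q) (y : V) : R := pd k (gam i j l) y.

Definition Qup (i j k l : 'I_q) (y : V) : R :=
  \sum_(m < q) ginv y k m * Qco i j m l y.

Definition Qhat (y : V) (xi : 'M[R]_q) : 'M[R]_q :=
  \matrix_(i, k) \sum_(j < q) \sum_(l < q) Qup i j k l y * xi j l.

Definition tinner (y : V) (xi eta : 'M[R]_q) : R :=
  \sum_(i < q) \sum_(k < q) \sum_(a < q) \sum_(b < q)
     gco i a y * gco k b y * xi i k * eta a b.

Definition hess_sec (y : V) (xi : 'M[R]_q) : R :=
  tinner y (Qhat y xi) xi / tinner y xi xi.

Definition const_hess_sec (U : set V) (c : R) : Prop :=
  forall y, U y -> forall xi : 'M[R]_q, xi^T = xi -> xi != 0 -> hess_sec y xi = c.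

(* Riemann curvature R(d_k,d_l) d_j = Rm^i_{jkl} d_i,
   R(X,Y)Z = nabla_X nabla_Y Z - nabla_Y nabla_X Z - nabla_[X,Y] Z *)
Definition Rm (i j k l : 'I_q) (y : V) : R :=
  pd k (gam i l j) y - pd l (gam i k j) y +
  \sum_(m < q) (gam i k m y * gam m l j y - gam i l m y * gam m k j y).

Definition ginner (y : V) (X Y : V) : R :=
  \sum_(i < q) \sum_(j < q) X 0 i * gco i j y * Y 0 j.

Definition sec_curv (y : V) (X Y : V) : R :=
  (\sum_(a < q) \sum_(i < q) \sum_(j < q) \sum_(k < q) \sum_(l < q)
      gco a i y * Rm i j k l y * X 0 k * Y 0 l * Y 0 j * X 0 a)
  / (ginner y X X * ginner y Y Y - ginner y X Y ^+ 2).

Definition const_sec_curv (U : set V) (K : R) : Prop :=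
  forall y, U y -> forall X Y : V, \rank (col_mx X Y) = 2%N -> sec_curv y X Y = K.

End Transverse.

From HB Require Import structures.
From mathcomp Require Import all_boot all_order all_algebra.
From mathcomp Require Import all_classical all_reals all_analysis.
From mathcomp Require Import ring lra.
Set Implicit Arguments. Unset Strict Implicit. Unset Printing Implicit Defensive.
Import Order.TTheory GRing.Theory Num.Theory.
Import numFieldNormedType.Exports.
Local Open Scope ring_scope.
Local Open Scope classical_set_scope.

(* In affine coordinates [g_ij = h_ij] and the Christoffel symbols are
   [gamma^i_jk = 1/2 g^im h_mjk], so [Q] and the Riemann tensor of [g] are both
   polynomial in [g^-1], [h_ijk] and [h_ijkl].  With
   [Theta(p,r,s,t) = h_prb g^bm h_mst], lowering an index gives
   [Q_ajkl = 1/2 (h_ajkl - Theta(k,a,j,l))], while the fourth derivatives cancel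
   in [g(R(x,y)y,x) = -1/4 (Theta(x,x,y,y) - Theta(x,y,x,y))].  Polarizing
   [<Q(xi),xi> = c |xi|^2] at [xi = x⊗x, y⊗y, x⊗x + y⊗y, x⊗y + y⊗x] gives
   [Theta(x,x,y,y) - Theta(x,y,x,y) = c (|x|^2 |y|^2 - <x,y>^2)], whence the
   sectional curvature [-c/4].  All index symmetries used come from Schwarz's
   theorem applied to the smooth potential [h]. *)

Section Contraction.
Variables (R : comRingType) (q : nat).
Local Notation I := 'I_q.
Implicit Types f g : I -> I -> I -> I -> R.

Definition contr4 f (p1 p2 p3 p4 : I -> R) : R :=
  \sum_a \sum_b \sum_c \sum_d f a b c d * p1 a * p2 b * p3 c * p4 d.

Lemma eq_contr4 f g p1 p2 p3 p4 : (forall a b c d, f a b c d = g a b c d) ->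
  contr4 f p1 p2 p3 p4 = contr4 g p1 p2 p3 p4.
Proof. by move=> fg; rewrite /contr4; do 4 (apply: eq_bigr => ? _); rewrite fg. Qed.

Lemma contr4_swap12 f p1 p2 p3 p4 :
  contr4 f p1 p2 p3 p4 = contr4 (fun a b c d => f b a c d) p2 p1 p3 p4.
Proof. by rewrite /contr4 exchange_big; do 4 (apply: eq_bigr => ? _); ring. Qed.

Lemma contr4_swap23 f p1 p2 p3 p4 :
  contr4 f p1 p2 p3 p4 = contr4 (fun a b c d => f a c b d) p1 p3 p2 p4.
Proof.
rewrite /contr4; apply: eq_bigr => a _; rewrite exchange_big.
by do 3 (apply: eq_bigr => ? _); ring.
Qed.

Lemma contr4_swap34 f p1 p2 p3 p4 :
  contr4 f p1 p2 p3 p4 = contr4 (fun a b c d => f a b d c) p1 p2 p4 p3.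
Proof.
rewrite /contr4; apply: eq_bigr => a _; apply: eq_bigr => b _; rewrite exchange_big.
by do 2 (apply: eq_bigr => ? _); ring.
Qed.

Lemma contr4D f g p1 p2 p3 p4 :
  contr4 (fun a b c d => f a b c d + g a b c d) p1 p2 p3 p4 =
  contr4 f p1 p2 p3 p4 + contr4 g p1 p2 p3 p4.
Proof.
rewrite /contr4 -big_split; apply: eq_bigr => a _; rewrite -big_split.
apply: eq_bigr => b _; rewrite -big_split; apply: eq_bigr => c _; rewrite -big_split.
by apply: eq_bigr => d _ /=; ring.
Qed.

Lemma contr4Z k f p1 p2 p3 p4 :
  contr4 (fun a b c d => k * f a b c d) p1 p2 p3 p4 = k * contr4 f p1 p2 p3 p4.
Proof.
rewrite /contr4 mulr_sumr; apply: eq_bigr => a _; rewrite mulr_sumr.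
apply: eq_bigr => b _; rewrite mulr_sumr; apply: eq_bigr => c _; rewrite mulr_sumr.
by apply: eq_bigr => d _ /=; ring.
Qed.

Lemma contr4B f g p1 p2 p3 p4 :
  contr4 (fun a b c d => f a b c d - g a b c d) p1 p2 p3 p4 =
  contr4 f p1 p2 p3 p4 - contr4 g p1 p2 p3 p4.
Proof. by rewrite -mulN1r -contr4Z -contr4D; apply: eq_contr4 => *; ring. Qed.

Lemma sum_delta (a : I) (u : I -> R) : \sum_m (a == m)%:R * u m = u a.
Proof.
rewrite (bigD1 a) //= eqxx mul1r big1 ?addr0 // => m /negbTE.
by rewrite eq_sym => ->; rewrite mul0r.
Qed.

End Contraction.

Lemma rank2_not_colinear (F : fieldType) (n : nat) (X Y : 'rV[F]_n) (k : F) :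
  \rank (col_mx X Y) = 2%N -> X != k *: Y /\ Y != k *: X.
Proof.
have rank_le1 (u v : 'M[F]_1) (Z : 'rV[F]_n) : (\rank (col_mx (u *m Z) (v *m Z)) <= 1)%N.
  by rewrite -mul_col_mx (leq_trans (mxrankM_maxr _ _)) ?rank_leq_row.
move=> rk; split; apply/negP => /eqP E.
- by move: (rank_le1 k%:M 1%:M Y); rewrite !mul_scalar_mx scale1r -E rk.
- by move: (rank_le1 1%:M k%:M X); rewrite !mul_scalar_mx scale1r -E rk.
Qed.

(* At a point of an affine chart, [g] is the Hessian of the potential, [B] its
   inverse, and [T], [F] are the third and fourth derivatives of the potential. *)
Section HessianAlgebra.
Variables (R : realFieldType) (q : nat).
Local Notation I := 'I_q.
Variables (g B : I -> I -> R) (T : I -> I -> I -> R) (F : I -> I -> I -> I -> R).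
Hypothesis g_sym : forall a b, g a b = g b a.
Hypothesis B_sym : forall a b, B a b = B b a.
Hypothesis gB : forall a b, \sum_k g a k * B k b = (a == b)%:R.
Hypothesis T12 : forall a b c, T a b c = T b a c.
Hypothesis T23 : forall a b c, T a b c = T a c b.
Hypothesis F12 : forall a b c d, F a b c d = F b a c d.
Hypothesis F23 : forall a b c d, F a b c d = F a c b d.
Hypothesis F34 : forall a b c d, F a b c d = F a b d c.

Lemma lower_raise a (u : I -> R) : \sum_i g a i * (\sum_m B i m * u m) = u a.
Proof.
under eq_bigr do rewrite mulr_sumr.
rewrite exchange_big /= -[RHS]sum_delta; apply: eq_bigr => m _.
by rewrite -gB mulr_suml; apply: eq_bigr => i _; rewrite mulrA.
Qed.

Definition Theta (p r s t : I) : R := \sum_b \sum_m T p r b * B b m * T m s t.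

Definition chris (i j k : I) : R := 2^-1 * \sum_m B i m * T m j k.

(* [dchris i j k l] is [d_k (chris i j l)], using [d_k B = - B (d_k g) B]. *)
Definition dchris (i j k l : I) : R := 2^-1 * \sum_m (B i m * F m j l k -
  T m j l * \sum_a \sum_b B i a * T k a b * B b m).

Lemma chris_low a k m : \sum_i g a i * chris i k m = 2^-1 * T a k m.
Proof. by under eq_bigr do rewrite mulrCA; rewrite -mulr_sumr lower_raise. Qed.

Lemma dchris_low a j k l :
  \sum_i g a i * dchris i j k l = 2^-1 * (F a j l k - Theta k a j l).
Proof.
have dchrisE i : dchris i j k l = 2^-1 * \sum_m B i m * (F m j l k - Theta k m j l).
  rewrite /dchris /Theta; congr (_ * _); under [RHS]eq_bigr do rewrite mulrBr.
  rewrite !sumrB; congr (_ - _).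
  under eq_bigr do rewrite mulr_sumr; under [RHS]eq_bigr do rewrite mulr_sumr.
  rewrite exchange_big /=; apply: eq_bigr => x _.
  under eq_bigr do rewrite mulr_sumr; under [RHS]eq_bigr do rewrite mulr_sumr.
  by rewrite exchange_big /=; apply: eq_bigr => y _; apply: eq_bigr => m _; ring.
under eq_bigr do rewrite dchrisE mulrCA.
by rewrite -mulr_sumr lower_raise.
Qed.

Definition qhat (Q : I -> I -> I -> I -> R) (xi : 'M[R]_q) : 'M[R]_q :=
  \matrix_(i, k) \sum_j \sum_l (\sum_m B k m * Q i j m l) * xi j l.

Definition tdot (xi eta : 'M[R]_q) : R :=
  \sum_i \sum_k \sum_a \sum_b g i a * g k b * xi i k * eta a b.

Definition hess_form (xi eta : 'M[R]_q) : R :=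
  \sum_a \sum_b \sum_j \sum_l (\sum_i g a i * dchris i j b l) * xi j l * eta a b.

Lemma tdot_qhat xi eta : tdot (qhat dchris xi) eta = hess_form xi eta.
Proof.
rewrite /tdot /hess_form.
under eq_bigr => i _ do (rewrite exchange_big /=; under eq_bigr => a _ do rewrite exchange_big).
rewrite exchange_big /=; apply: eq_bigr => a _.
rewrite exchange_big /=; apply: eq_bigr => b _.
have lower i : \sum_k g i a * g k b * qhat dchris xi i k * eta a b =
    g i a * (\sum_j \sum_l dchris i j b l * xi j l) * eta a b.
  rewrite -mulr_suml; congr (_ * _); under eq_bigr do rewrite -mulrA.
  rewrite -mulr_sumr; congr (_ * _).
  rewrite -(lower_raise b (fun m => \sum_j \sum_l dchris i j m l * xi j l)).
  apply: eq_bigr => k _; rewrite mxE g_sym; congr (_ * _).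
  under [RHS]eq_bigr do rewrite mulr_sumr; rewrite [RHS]exchange_big.
  apply: eq_bigr => j _; under [RHS]eq_bigr do rewrite mulr_sumr.
  rewrite [RHS]exchange_big /=; apply: eq_bigr => l _.
  by rewrite big_distrl; apply: eq_bigr => m _ /=; ring.
under eq_bigr do rewrite lower; under eq_bigr do rewrite mulr_sumr big_distrl.
rewrite exchange_big /=; apply: eq_bigr => j _.
under eq_bigr do rewrite mulr_sumr big_distrl.
rewrite exchange_big /=; apply: eq_bigr => l _.
by rewrite !big_distrl; apply: eq_bigr => i _ /=; rewrite g_sym; ring.
Qed.

Definition outer (u v : I -> R) : 'M[R]_q := \matrix_(j, l) (u j * v l).

Lemma tr_outer u v : (outer u v)^T = outer v u.
Proof. by apply/matrixP => i j; rewrite !mxE mulrC. Qed.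

Definition gdot (u v : I -> R) : R := \sum_i \sum_j u i * g i j * v j.

Lemma gdotC u v : gdot u v = gdot v u.
Proof.
rewrite /gdot exchange_big; apply: eq_bigr => i _; apply: eq_bigr => j _.
by rewrite g_sym; ring.
Qed.

Lemma gdotDl a b u v w :
  gdot (fun i => a * u i + b * v i) w = a * gdot u w + b * gdot v w.
Proof.
rewrite /gdot !mulr_sumr -big_split; apply: eq_bigr => i _ /=.
by rewrite !mulr_sumr -big_split; apply: eq_bigr => j _ /=; ring.
Qed.

Lemma gdotDr a b u v w :
  gdot w (fun i => a * u i + b * v i) = a * gdot w u + b * gdot w v.
Proof. by rewrite gdotC gdotDl !(gdotC w). Qed.

Lemma tdot_outer u v w z : tdot (outer u v) (outer w z) = gdot u w * gdot v z.
Proof.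
rewrite /tdot /gdot big_distrl; apply: eq_bigr => i _ /=.
rewrite exchange_big big_distrl; apply: eq_bigr => a _ /=.
rewrite mulr_sumr; apply: eq_bigr => k _ /=.
by rewrite mulr_sumr; apply: eq_bigr => b _ /=; rewrite !mxE; ring.
Qed.

Lemma hess_form_outer u v w z :
  hess_form (outer u v) (outer w z) =
  2^-1 * (contr4 F w u v z - contr4 Theta z w u v).
Proof.
have -> : hess_form (outer u v) (outer w z) =
    contr4 (fun a j b l => \sum_i g a i * dchris i j b l) w u z v.
  rewrite /hess_form /contr4; apply: eq_bigr => a _; rewrite exchange_big /=.
  by do 3 (apply: eq_bigr => ? _); rewrite !mxE; ring.
rewrite (eq_contr4 w u z v (fun a j b l => dchris_low a j b l)) contr4Z.
rewrite (contr4B (fun a j b l => F a j l b) (fun a j b l => Theta b a j l)).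
by rewrite contr4_swap34 [X in _ - X]contr4_swap23 [X in _ - X]contr4_swap12.
Qed.

Lemma tdotDl xi xi' eta : tdot (xi + xi') eta = tdot xi eta + tdot xi' eta.
Proof.
rewrite /tdot -big_split; apply: eq_bigr => i _; rewrite -big_split.
apply: eq_bigr => k _; rewrite -big_split; apply: eq_bigr => a _.
by rewrite -big_split; apply: eq_bigr => b _; rewrite !mxE /=; ring.
Qed.

Lemma tdotDr xi eta eta' : tdot xi (eta + eta') = tdot xi eta + tdot xi eta'.
Proof.
rewrite /tdot -big_split; apply: eq_bigr => i _; rewrite -big_split.
apply: eq_bigr => k _; rewrite -big_split; apply: eq_bigr => a _.
by rewrite -big_split; apply: eq_bigr => b _; rewrite !mxE /=; ring.
Qed.

Lemma hess_formDl xi xi' eta :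
  hess_form (xi + xi') eta = hess_form xi eta + hess_form xi' eta.
Proof.
rewrite /hess_form -big_split; apply: eq_bigr => a _; rewrite -big_split.
apply: eq_bigr => b _; rewrite -big_split; apply: eq_bigr => j _.
by rewrite -big_split; apply: eq_bigr => l _; rewrite !mxE /=; ring.
Qed.

Lemma hess_formDr xi eta eta' :
  hess_form xi (eta + eta') = hess_form xi eta + hess_form xi eta'.
Proof.
rewrite /hess_form -big_split; apply: eq_bigr => a _; rewrite -big_split.
apply: eq_bigr => b _; rewrite -big_split; apply: eq_bigr => j _.
by rewrite -big_split; apply: eq_bigr => l _; rewrite !mxE /=; ring.
Qed.

Lemma Theta12 p r s t : Theta p r s t = Theta r p s t.
Proof. by rewrite /Theta; do 2 (apply: eq_bigr => ? _); rewrite T12. Qed.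

Lemma Theta34 p r s t : Theta p r s t = Theta p r t s.
Proof. by rewrite /Theta; do 2 (apply: eq_bigr => ? _); rewrite [T _ s t]T23. Qed.

Lemma Theta_pair p r s t : Theta p r s t = Theta s t p r.
Proof.
have Tcycle a b c : T a b c = T b c a by rewrite T12 T23.
rewrite /Theta exchange_big; apply: eq_bigr => x _; apply: eq_bigr => y _.
by rewrite (Tcycle x s t) (Tcycle y p r) (B_sym y x); ring.
Qed.

Lemma contr4F12 u v w z : contr4 F u v w z = contr4 F v u w z.
Proof. by rewrite contr4_swap12; apply: eq_contr4 => *; rewrite F12. Qed.

Lemma contr4F23 u v w z : contr4 F u v w z = contr4 F u w v z.
Proof. by rewrite contr4_swap23; apply: eq_contr4 => *; rewrite F23. Qed.

Lemma contr4F34 u v w z : contr4 F u v w z = contr4 F u v z w.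
Proof. by rewrite contr4_swap34; apply: eq_contr4 => *; rewrite F34. Qed.

Lemma contr4Theta12 u v w z : contr4 Theta u v w z = contr4 Theta v u w z.
Proof. by rewrite contr4_swap12; apply: eq_contr4 => *; rewrite Theta12. Qed.

Lemma contr4Theta34 u v w z : contr4 Theta u v w z = contr4 Theta u v z w.
Proof. by rewrite contr4_swap34; apply: eq_contr4 => *; rewrite Theta34. Qed.

Lemma contr4Theta_pair u v w z : contr4 Theta u v w z = contr4 Theta w z u v.
Proof.
rewrite contr4_swap23 contr4_swap12 contr4_swap34 contr4_swap23.
by apply: eq_contr4 => * /=; rewrite Theta_pair.
Qed.

Lemma contr4F_xxyy x y :
  [/\ contr4 F y x x y = contr4 F x x y y, contr4 F x y y x = contr4 F x x y y,
      contr4 F y x y x = contr4 F x x y y, contr4 F x y x y = contr4 F x x y y &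
      contr4 F y y x x = contr4 F x x y y].
Proof.
have Fxyxy : contr4 F x y x y = contr4 F x x y y by rewrite contr4F23.
have Fxyyx : contr4 F x y y x = contr4 F x x y y by rewrite contr4F34.
split=> //.
- by rewrite contr4F12.
- by rewrite contr4F12.
- by rewrite contr4F23 contr4F12 Fxyyx.
Qed.

Lemma contr4Theta_xxyy x y :
  [/\ contr4 Theta y y x x = contr4 Theta x x y y,
      contr4 Theta y x x y = contr4 Theta x y x y,
      contr4 Theta y x y x = contr4 Theta x y x y &
      contr4 Theta x y y x = contr4 Theta x y x y].
Proof.
split; first exact: contr4Theta_pair.
- exact: contr4Theta12.
- by rewrite contr4Theta12 contr4Theta34.
- exact: contr4Theta34.
Qed.

Lemma const_hess_Theta c x y :
  (forall xi, xi^T = xi -> tdot xi xi != 0 -> hess_form xi xi = c * tdot xi xi) ->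
  0 < gdot x x -> 0 < gdot y y ->
  contr4 Theta x x y y - contr4 Theta x y x y =
  c * (gdot x x * gdot y y - gdot x y ^+ 2).
Proof.
move=> hess gx gy.
have sym_xy : (outer x y + outer y x)^T = outer x y + outer y x.
  by rewrite linearD /= !tr_outer addrC.
have Hx := hess _ (tr_outer x x); have Hy := hess _ (tr_outer y y).
have Hxy := hess _ sym_xy; have Hd := hess (outer x x + outer y y).
rewrite !tdotDl !tdotDr !hess_formDl !hess_formDr in Hxy Hd.
rewrite linearD /= !tr_outer in Hd.
rewrite !tdot_outer !hess_form_outer (gdotC y x) in Hx Hy Hxy Hd.
have [F1 F2 F3 F4 F5] := contr4F_xxyy x y.
have [T1 T2 T3 T4] := contr4Theta_xxyy x y.
rewrite F1 F2 F3 F4 F5 T1 T2 T3 T4 in Hxy Hd.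
move: Hx Hy (Hd erefl) Hxy.
move: (contr4 F x x y y) (contr4 F x x x x) (contr4 F y y y y) (contr4 Theta x x x x)
  (contr4 Theta y y y y) (contr4 Theta x x y y) (contr4 Theta x y x y) => a ax ay tx ty t1 t2.
move: (gdot x x) (gdot y y) (gdot x y) gx gy (sqr_ge0 (gdot x y)) => gxx gyy gxy gx' gy' sxy.
have k1 : 0 < gxx * gyy by rewrite mulr_gt0.
have k2 : 0 < gxx * gxx by rewrite mulr_gt0.
have k3 : 0 < gyy * gyy by rewrite mulr_gt0.
rewrite expr2 in sxy *.
move=> Kx Ky Kd Kxy.
move: (Kx (lt0r_neq0 k2)) (Ky (lt0r_neq0 k3)).
have /Kd : gxx * gxx + gxy * gxy + (gxy * gxy + gyy * gyy) != 0 by rewrite gt_eqF //; lra.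
have /Kxy : gxx * gyy + gxy * gxy + (gxy * gxy + gyy * gxx) != 0 by rewrite gt_eqF //; lra.
lra.
Qed.

Definition riemann (i j k l : I) : R := dchris i l k j - dchris i k l j +
  \sum_m (chris i k m * chris m l j - chris i l m * chris m k j).

Lemma inv4E : (4 : R)^-1 = 2^-1 * 2^-1.
Proof. by rewrite -invfM; congr (_^-1); ring. Qed.

Lemma chris_chris_low a k l j :
  \sum_m \sum_i g a i * chris i k m * chris m l j = 4^-1 * Theta a k l j.
Proof.
rewrite /Theta mulr_sumr; apply: eq_bigr => m _.
rewrite -big_distrl /= chris_low /chris !mulr_sumr.
by apply: eq_bigr => n _; rewrite inv4E; ring.
Qed.

Lemma riemann_low a j k l : \sum_i g a i * riemann i j k l =
  2^-1 * F a l j k + (- 2^-1) * F a k j l + (- 2^-1) * Theta k a l j +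
  2^-1 * Theta l a k j + 4^-1 * Theta a k l j + (- 4^-1) * Theta a l k j.
Proof.
rewrite (eq_bigr (fun i => g a i * dchris i l k j - g a i * dchris i k l j +
   (\sum_m g a i * chris i k m * chris m l j - \sum_m g a i * chris i l m * chris m k j)));
  last by move=> i _; rewrite -sumrB mulrDr mulrBr mulr_sumr; congr (_ + _);
    apply: eq_bigr => m _; ring.
rewrite big_split /= !sumrB !dchris_low.
rewrite [X in _ + (X - _)]exchange_big [X in _ + (_ - X)]exchange_big /=.
rewrite !chris_chris_low; ring.
Qed.

Definition curv_num (x y : I -> R) : R := \sum_a \sum_i \sum_j \sum_k \sum_l
  g a i * riemann i j k l * x k * y l * y j * x a.

Lemma curv_numE x y : curv_num x y = - 4^-1 * (contr4 Theta x x y y - contr4 Theta x y x y).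
Proof.
have -> : curv_num x y = contr4 (fun a j k l => \sum_i g a i * riemann i j k l) x y x y.
  rewrite /curv_num /contr4; apply: eq_bigr => a _.
  rewrite exchange_big; apply: eq_bigr => j _ /=.
  rewrite exchange_big; apply: eq_bigr => k _ /=.
  rewrite exchange_big; apply: eq_bigr => l _ /=.
  by rewrite !big_distrl; apply: eq_bigr => i _ /=; ring.
rewrite (eq_contr4 x y x y (fun a j k l => riemann_low a j k l)) !contr4D !contr4Z.
have -> : contr4 (fun a j k l => F a l j k) x y x y = contr4 F x x y y.
  by rewrite contr4_swap34 contr4_swap23 [LHS]contr4F34 [LHS]contr4F23.
have -> : contr4 (fun a j k l => F a k j l) x y x y = contr4 F x x y y.
  by rewrite contr4_swap23.
have -> : contr4 (fun a j k l => Theta k a l j) x y x y = contr4 Theta x x y y.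
  by rewrite contr4_swap23 contr4_swap12 contr4_swap34.
have -> : contr4 (fun a j k l => Theta l a k j) x y x y = contr4 Theta x y x y.
  by rewrite contr4_swap23 contr4_swap34 contr4_swap23 contr4_swap12 contr4Theta12.
have -> : contr4 (fun a j k l => Theta a k l j) x y x y = contr4 Theta x x y y.
  by rewrite contr4_swap23 contr4_swap34.
have -> : contr4 (fun a j k l => Theta a l k j) x y x y = contr4 Theta x y x y.
  by rewrite contr4_swap23 contr4_swap34 contr4_swap23.
rewrite inv4E; lra.
Qed.

Definition entries (X : 'rV[R]_q) : I -> R := fun i => X 0 i.

Hypothesis g_pos : forall X : 'rV[R]_q, X != 0 -> 0 < gdot (entries X) (entries X).

Lemma gram_det_gt0 (X Y : 'rV[R]_q) : \rank (col_mx X Y) = 2%N ->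
  0 < gdot (entries X) (entries X) * gdot (entries Y) (entries Y) -
      gdot (entries X) (entries Y) ^+ 2.
Proof.
move=> rk; have [_] := rank2_not_colinear 0 rk; rewrite scale0r => /g_pos gy.
set gxx := gdot (entries X) _; set gyy := gdot (entries Y) (entries Y) in gy *.
set gxy := gdot (entries X) (entries Y).
pose Z := gyy *: X - gxy *: Y.
have Z_neq0 : Z != 0.
  have [+ _] := rank2_not_colinear (gxy / gyy) rk; apply: contra => /eqP Z0.
  apply/eqP; move/subr0_eq: Z0 => /(congr1 (fun M => gyy^-1 *: M)).
  by rewrite !scalerA mulVf ?gt_eqF // scale1r mulrC.
have entriesZ : entries Z = fun i => gyy * entries X i + (- gxy) * entries Y i.
  by apply: funext => i; rewrite /entries !mxE mulNr.
have := g_pos Z_neq0.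
rewrite entriesZ gdotDl !gdotDr -/gxx -/gyy -/gxy (gdotC (entries Y)) -/gxy => gZ.
have : 0 < gyy * (gxx * gyy - gxy ^+ 2) by move: gZ; rewrite expr2; congr (0 < _); ring.
by rewrite pmulr_rgt0.
Qed.

Lemma tdot0l eta : tdot 0 eta = 0.
Proof.
rewrite /tdot big1 // => i _; rewrite big1 // => k _.
by rewrite big1 // => a _; rewrite big1 // => b _; rewrite mxE !mulr0 mul0r.
Qed.

Lemma const_hess_sec_curv c (X Y : 'rV[R]_q) :
  (forall xi, xi^T = xi -> xi != 0 -> tdot (qhat dchris xi) xi / tdot xi xi = c) ->
  \rank (col_mx X Y) = 2%N ->
  curv_num (entries X) (entries Y) /
    (gdot (entries X) (entries X) * gdot (entries Y) (entries Y) -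
     gdot (entries X) (entries Y) ^+ 2) = - (c / 4).
Proof.
move=> hess rk.
have hess_form_const xi : xi^T = xi -> tdot xi xi != 0 -> hess_form xi xi = c * tdot xi xi.
  move=> xi_sym t0; have xi0 : xi != 0 by apply: contraNneq t0 => ->; rewrite tdot0l.
  by rewrite -tdot_qhat -(hess xi xi_sym xi0) divfK.
have [] := rank2_not_colinear 0 rk; rewrite !scale0r => /g_pos gx /g_pos gy.
rewrite curv_numE (const_hess_Theta hess_form_const gx gy) mulrA.
by rewrite mulfK ?gt_eqF ?gram_det_gt0 //; lra.
Qed.

End HessianAlgebra.

Section Schwarz.
Variables (R : realType) (V : normedModType R).
Implicit Types (f : V -> R) (v w y : V).

Let line_quotient f v y s :
  (fun t : R => t^-1 *: ((fun u : R => f (u *: v + y)) (t *: 1 + s) - f (s *: v + y)))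
  = (fun t : R => t^-1 *: ((f \o shift (s *: v + y)) (t *: v) - f (s *: v + y))).
Proof. by apply: funext => t /=; rewrite scaler1 scalerDl addrA. Qed.

Lemma derivable_line f v y s :
  derivable f (s *: v + y) v -> derivable (fun u : R => f (u *: v + y)) s 1.
Proof. by rewrite /derivable /= line_quotient. Qed.

Lemma derive_line f v y s :
  'D_1 (fun u : R => f (u *: v + y)) s = 'D_v f (s *: v + y).
Proof. by rewrite /derive /= line_quotient. Qed.

Lemma MVT0 (phi : R -> R) (t : R) : 0 < t ->
  (forall s, 0 <= s <= t -> derivable phi s 1) ->
  exists2 s, 0 < s < t & phi t - phi 0 = 'D_1 phi s * t.
Proof.
move=> t0 dphi.
have dphi_open x : x \in `]0, t[%R -> is_derive x 1 phi ('D_1 phi x).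
  rewrite in_itv /= => /andP[x0 xt]; apply: derivableP; apply: dphi.
  by rewrite !ltW.
have cphi : {within `[0, t], continuous phi}.
  apply: continuous_in_subspaceT => x; rewrite inE /= in_itv /= => xt.
  by apply: differentiable_continuous; apply/derivable1_diffP; apply: dphi.
have [s] := MVT t0 dphi_open cphi.
by rewrite in_itv /= subr0 => st ->; exists s.
Qed.

Definition diff2 f v w y (t : R) : R :=
  f (t *: v + (t *: w + y)) - f (t *: v + y) - (f (t *: w + y) - f y).

Lemma diff2C f v w y t : diff2 f v w y t = diff2 f w v y t.
Proof. by rewrite /diff2 addrCA; ring. Qed.

Lemma diff2_MVT f (U : set V) v w y (r t : R) :
  ball y r `<=` U ->
  (forall z, U z -> differentiable f z) ->
  (forall z, U z -> differentiable ('D_v f) z) ->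
  0 < t -> t * (`|v| + `|w| + 1) < r ->
  exists z, `|y - z| < t * (`|v| + `|w| + 1) /\
    diff2 f v w y t = t ^+ 2 * 'D_w ('D_v f) z.
Proof.
move=> bU df dvf t0 tr; set K := `|v| + `|w| + 1.
have near_y a b : 0 <= a <= t -> 0 <= b <= t -> `|y - (a *: v + (b *: w + y))| < t * K.
  move=> /andP[a0 at_] /andP[b0 bt].
  rewrite addrA opprD addrCA subrr addr0 normrN.
  apply: le_lt_trans (ler_normD _ _) _; rewrite !normrZ !ger0_norm //.
  rewrite /K; have := normr_ge0 v; have := normr_ge0 w; nra.
have inU a b : 0 <= a <= t -> 0 <= b <= t -> U (a *: v + (b *: w + y)).
  move=> ha hb; apply: bU; rewrite -ball_normE /ball_ /=.
  exact: lt_trans (near_y a b ha hb) tr.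
have t0' : (0:R) <= 0 <= t by rewrite lexx ltW.
have tt : (0:R) <= t <= t by rewrite lexx ltW.
have inU0 a : 0 <= a <= t -> U (a *: v + y).
  by move=> ha; have := inU a 0 ha t0'; rewrite scale0r add0r.
pose phi s := f (s *: v + (t *: w + y)) - f (s *: v + y).
have dphi s : 0 <= s <= t -> derivable phi s 1.
  move=> hs; apply: derivableB; apply: derivable_line; apply: diff_derivable.
    exact: df (inU s t hs tt).
  exact: df (inU0 s hs).
have [s1 /andP[s10 s1t] E1] := MVT0 t0 dphi.
have hs1 : 0 <= s1 <= t by rewrite !ltW.
pose psi u := 'D_v f (u *: w + (s1 *: v + y)).
have dpsi u : 0 <= u <= t -> derivable psi u 1.
  move=> hu; apply: (@derivable_line ('D_v f)); apply: diff_derivable.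
  by have := dvf _ (inU s1 u hs1 hu); rewrite [s1 *: v + _]addrCA.
have [u1 /andP[u10 u1t] E2] := MVT0 t0 dpsi.
exists (u1 *: w + (s1 *: v + y)); split.
  by rewrite addrCA; apply: near_y => //; rewrite !ltW.
have -> : diff2 f v w y t = (psi t - psi 0) * t.
  have := E1; rewrite /phi !scale0r !add0r -/(diff2 f v w y t) => ->.
  rewrite deriveB.
  - by rewrite !derive_line /psi scale0r add0r addrCA.
  - by apply: derivable_line; apply: diff_derivable; exact: df (inU s1 t hs1 tt).
  - by apply: derivable_line; apply: diff_derivable; exact: df (inU0 s1 hs1).
by rewrite E2 /psi (@derive_line ('D_v f)); ring.
Qed.

Lemma continuous_at_ball (phi : V -> R) y e : {for y, continuous phi} -> 0 < e ->
  exists2 d, 0 < d & forall z, `|y - z| < d -> `|phi y - phi z| < e.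
Proof.
move=> cphi e0; have /cvgrPdist_lt/(_ e e0) := cphi.
move/nbhs_ballP => [d d0 hd]; exists d => // z hz; apply: hd.
by rewrite -ball_normE /ball_ /=.
Qed.

(* Schwarz: by the mean value theorem, the symmetric second difference [diff2]
   is [t^2] times either mixed derivative, taken at points close to [y]. *)
Lemma derive_commute f (U : set V) v w y : open U -> U y ->
  (forall z, U z -> differentiable f z) ->
  (forall z, U z -> differentiable ('D_v f) z) ->
  (forall z, U z -> differentiable ('D_w f) z) ->
  {for y, continuous ('D_w ('D_v f))} -> {for y, continuous ('D_v ('D_w f))} ->
  'D_w ('D_v f) y = 'D_v ('D_w f) y.
Proof.
move=> oU Uy df dvf dwf cA cB.
have /nbhs_ballP[r r0 bU] : nbhs y U by apply: open_nbhs_nbhs.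
set A := 'D_w ('D_v f); set B := 'D_v ('D_w f).
apply/eqP; apply/negPn/negP => neq.
set e := `|A y - B y| / 2.
have e0 : 0 < e by rewrite divr_gt0 // normr_gt0 subr_eq0.
have [dA dA0 hA] := continuous_at_ball cA e0.
have [dB dB0 hB] := continuous_at_ball cB e0.
set K := `|v| + `|w| + 1.
have K0 : 0 < K by rewrite /K ltr_wpDl ?addr_ge0.
set m := Num.min (Num.min r dA) dB.
have m0 : 0 < m by rewrite /m !lt_min r0 dA0 dB0.
have [mr mA mB] : [/\ m <= r, m <= dA & m <= dB].
  by rewrite /m !ge_min !lexx !orbT.
set t := m / (2 * K).
have t0 : 0 < t by rewrite divr_gt0 // mulr_gt0.
have tKm : t * K < m.
  rewrite /t invfM mulrA -mulrA mulVf ?gt_eqF // mulr1.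
  by rewrite ltr_pdivrMr // ltr_pMr // ltr1n.
have [z1 [hz1 E1]] := diff2_MVT bU df dvf t0 (lt_le_trans tKm mr).
have := @diff2_MVT f U w v y r t bU df dwf t0; rewrite (addrC `|w|) -/K.
move=> /(_ (lt_le_trans tKm mr)) [z2 [hz2 E2]].
have AB : A z1 = B z2.
  apply: (@mulfI _ (t ^+ 2)); first by rewrite expf_neq0 // gt_eqF.
  exact: etrans (esym E1) (etrans (diff2C f v w y t) E2).
have h1 := hA z1 (lt_le_trans (lt_trans hz1 tKm) mA).
have h2 := hB z2 (lt_le_trans (lt_trans hz2 tKm) mB).
have : `|A y - B y| < 2 * e.
  have -> : A y - B y = (A y - A z1) - (B y - B z2) by rewrite AB opprB addrA subrK.
  have -> : 2 * e = e + e by ring.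
  exact: le_lt_trans (ler_normB _ _) (ltrD h1 h2).
by rewrite /e mulrC divfK ?ltxx.
Qed.

End Schwarz.

Section Derivability.
Variables (R : realType) (V : normedModType R).
Implicit Types (y v : V).

Lemma derivable_sum_seq (I : Type) (r : seq I) (P : pred I) (F : I -> V -> R) y v :
  (forall i, derivable (F i) y v) ->
  derivable (fun z => \sum_(i <- r | P i) F i z) y v.
Proof.
move=> dF; rewrite -fct_sumE.
by elim/big_ind: _ => [|f g|i _]; [exact: derivable_cst|exact: derivableD|exact: dF].
Qed.

Lemma derivable_prod_seq (I : Type) (r : seq I) (P : pred I) (F : I -> V -> R) y v :
  (forall i, derivable (F i) y v) ->
  derivable (fun z => \prod_(i <- r | P i) F i z) y v.
Proof.
move=> dF; rewrite -fct_prodE.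
by elim/big_ind: _ => [|f g|i _]; [exact: derivable_cst|exact: derivableM|exact: dF].
Qed.

Lemma derivable_scale (c : R) (f : V -> R) y v :
  derivable f y v -> derivable (fun z => c * f z) y v.
Proof. exact: (derivableM (derivable_cst c y v)). Qed.

Lemma derive_scale (c : R) (f : V -> R) y v : derivable f y v ->
  'D_v (fun z => c * f z) y = c * 'D_v f y.
Proof. exact: deriveZ. Qed.

Lemma derive_mul (f g : V -> R) y v : derivable f y v -> derivable g y v ->
  'D_v (fun z => f z * g z) y = f y * 'D_v g y + g y * 'D_v f y.
Proof. exact: deriveM. Qed.

Lemma derivable_det n (M : V -> 'M[R]_n) y v :
  (forall a b, derivable (fun z => M z a b) y v) ->
  derivable (fun z => \det (M z)) y v.
Proof.
move=> dM; apply: derivable_sum_seq => s.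
by apply: derivable_scale; apply: derivable_prod_seq => i; exact: dM.
Qed.

Lemma derivable_adj n (M : V -> 'M[R]_n) y v i j :
  (forall a b, derivable (fun z => M z a b) y v) ->
  derivable (fun z => \adj (M z) i j) y v.
Proof.
move=> dM; under [fun z => _]funext => z do rewrite mxE.
apply: derivable_scale; apply: derivable_det => a b.
under [fun z => _]funext => z do rewrite !mxE.
exact: dM.
Qed.

Lemma derive_big_sum n (F : 'I_n -> V -> R) y v :
  (forall i, derivable (F i) y v) ->
  'D_v (fun z => \sum_(i < n) F i z) y = \sum_(i < n) 'D_v (F i) y.
Proof. by move=> dF; rewrite -fct_sumE derive_sum. Qed.

Lemma derive_mx_inv n (A B : V -> 'M[R]_n) y v i j :
  (\forall z \near y, B z *m A z = 1%:M) -> A y *m B y = 1%:M ->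
  (forall a b, derivable (fun z => A z a b) y v) ->
  (forall a b, derivable (fun z => B z a b) y v) ->
  'D_v (fun z => B z i j) y =
  - \sum_a \sum_b B y i a * 'D_v (fun z => A z a b) y * B y b j.
Proof.
move=> BA AB dA dB.
set dBm := \matrix_(a, b) 'D_v (fun z => B z a b) y.
set dAm := \matrix_(a, b) 'D_v (fun z => A z a b) y.
have dBA : dBm *m A y + B y *m dAm = 0.
  apply/matrixP => a b; rewrite !mxE.
  have D0 : 'D_v (fun z => \sum_l B z a l * A z l b) y = 0.
    rewrite (near_eq_derive (g := fun _ : V => ((a == b)%:R : R))) ?derive_cst //.
    by apply: filterS BA => z /matrixP/(_ a b); rewrite !mxE.
  rewrite -[RHS]D0 derive_big_sum => [|l]; last exact: derivableM.
  rewrite -big_split; apply: eq_bigr => l _ /=.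
  by rewrite derive_mul // !mxE; ring.
have : dBm = - (B y *m dAm *m B y).
  rewrite -[dBm]mulmx1 -AB mulmxA.
  by move/eqP: dBA; rewrite addr_eq0 => /eqP ->; rewrite mulNmx.
move/matrixP/(_ i j); rewrite !mxE => ->; congr (- _).
rewrite exchange_big; apply: eq_bigr => b _; rewrite mxE big_distrl.
by apply: eq_bigr => a _; rewrite mxE.
Qed.

End Derivability.

Section AffineChart.
Variables (R : realType) (q : nat) (U : set 'rV[R]_q) (h : 'rV[R]_q -> R).
Local Notation V := 'rV[R]_q.
Local Notation I := 'I_q.
Hypothesis U_open : open U.
Hypothesis h_smooth : smooth_on U h.

Lemma nbhs_U y : U y -> \near y, U y.
Proof. by move=> Uy; apply: open_nbhs_nbhs. Qed.

Lemma eq_pd_on (f g : V -> R) i y : U y -> (forall z, U z -> f z = g z) ->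
  pd i f y = pd i g y.
Proof. by move=> Uy fg; apply: near_eq_derive; apply: filterS (nbhs_U Uy). Qed.

Lemma derivable_iter_pd s y v : U y -> derivable (iter_pd s h) y v.
Proof. by move=> Uy; apply: diff_derivable; exact: h_smooth. Qed.

Lemma iter_pd_swap s1 s2 i j y : U y ->
  iter_pd (s1 ++ [:: i, j & s2]) h y = iter_pd (s1 ++ [:: j, i & s2]) h y.
Proof.
elim: s1 y => [|k s1 IH] y Uy /=; last by apply: eq_pd_on.
apply: (@derive_commute _ _ (iter_pd s2 h) U _ _ y U_open Uy).
- by move=> z Uz; exact: h_smooth s2 z Uz.
- by move=> z Uz; exact: h_smooth (j :: s2) z Uz.
- by move=> z Uz; exact: h_smooth (i :: s2) z Uz.
- exact/differentiable_continuous/(h_smooth (i :: j :: s2) Uy).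
- exact/differentiable_continuous/(h_smooth (j :: i :: s2) Uy).
Qed.

Definition hess3 (y : V) (a b c : I) : R := iter_pd [:: a; b; c] h y.
Definition hess4 (y : V) (a b c d : I) : R := iter_pd [:: a; b; c; d] h y.

Lemma gco_sym y a b : U y -> gco h a b y = gco h b a y.
Proof. exact: (iter_pd_swap [::] [::]). Qed.

Lemma hess3_12 y a b c : U y -> hess3 y a b c = hess3 y b a c.
Proof. exact: (iter_pd_swap [::] [:: c]). Qed.

Lemma hess3_23 y a b c : U y -> hess3 y a b c = hess3 y a c b.
Proof. exact: (iter_pd_swap [:: a] [::]). Qed.

Lemma hess4_12 y a b c d : U y -> hess4 y a b c d = hess4 y b a c d.
Proof. exact: (iter_pd_swap [::] [:: c; d]). Qed.

Lemma hess4_23 y a b c d : U y -> hess4 y a b c d = hess4 y a c b d.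
Proof. exact: (iter_pd_swap [:: a] [:: d]). Qed.

Lemma hess4_34 y a b c d : U y -> hess4 y a b c d = hess4 y a b d c.
Proof. exact: (iter_pd_swap [:: a; b] [::]). Qed.

Lemma gam_chris y i j k : U y -> gam h i j k y = chris (ginv h y) (hess3 y) i j k.
Proof.
move=> Uy; rewrite /gam /chris; congr (_ * _); apply: eq_bigr => m _; congr (_ * _).
rewrite -[pd j _ y]/(hess3 y j m k) -[pd k _ y]/(hess3 y k m j) -[pd m _ y]/(hess3 y m j k).
by rewrite (hess3_12 j) // (hess3_12 k) // (hess3_23 m k) //; ring.
Qed.

Hypothesis h_pos_def : pos_def_on h U.

Lemma gmx_unit y : U y -> gmx h y \in unitmx.
Proof.
move=> Uy; rewrite unitmxE unitfE; apply/negP => /det0P [x x0 xG].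
have := h_pos_def Uy x0.
have -> : \sum_i \sum_j x 0 i * gco h i j y * x 0 j = \sum_j (x *m gmx h y) 0 j * x 0 j.
  rewrite exchange_big; apply: eq_bigr => j _; rewrite mxE big_distrl.
  by apply: eq_bigr => i _; rewrite mxE.
by rewrite xG big1 ?ltxx // => j _; rewrite mxE mul0r.
Qed.

Lemma ginv_sym y a b : U y -> ginv h y a b = ginv h y b a.
Proof.
move=> Uy; have gmx_sym : (gmx h y)^T = gmx h y.
  by apply/matrixP => i j; rewrite !mxE gco_sym.
by rewrite /ginv -[in RHS]gmx_sym -trmx_inv mxE.
Qed.

Lemma gco_ginv y a b : U y -> \sum_k gco h a k y * ginv h y k b = (a == b)%:R.
Proof.
move=> Uy; have /matrixP/(_ a b) := mulmxV (gmx_unit Uy).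
by rewrite !mxE => <-; apply: eq_bigr => k _; rewrite mxE.
Qed.

Lemma derivable_gco y v a b : U y -> derivable (gco h a b) y v.
Proof. exact: (derivable_iter_pd (s := [:: a; b])). Qed.

Lemma gmx_entry a b : (fun z => gmx h z a b) = gco h a b.
Proof. by apply: funext => z; rewrite mxE. Qed.

Lemma derivable_gmx y v a b : U y -> derivable (fun z => gmx h z a b) y v.
Proof. by rewrite gmx_entry; exact: derivable_gco. Qed.

Lemma derivable_ginv y v a b : U y -> derivable (fun z => ginv h z a b) y v.
Proof.
move=> Uy; apply: (@near_eq_derivable _ _ _ (fun z => (\det (gmx h z))^-1 * \adj (gmx h z) a b)).
  by apply: filterS (nbhs_U Uy) => z Uz; rewrite /ginv /invmx (gmx_unit Uz) [RHS]mxE.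
have dG c d : derivable (fun z => gmx h z c d) y v by exact: derivable_gmx.
apply: derivableM; last exact: derivable_adj.
by apply: derivableV; [rewrite -unitfE -unitmxE gmx_unit | exact: derivable_det].
Qed.

Lemma derive_ginv y v i j : U y ->
  'D_v (fun z => ginv h z i j) y =
  - \sum_a \sum_b ginv h y i a * 'D_v (gco h a b) y * ginv h y b j.
Proof.
move=> Uy; rewrite (derive_mx_inv (A := gmx h)) //.
- by under eq_bigr do under eq_bigr do rewrite gmx_entry.
- by apply: filterS (nbhs_U Uy) => z Uz; exact: mulVmx (gmx_unit Uz).
- exact: mulmxV (gmx_unit Uy).
- by move=> a b; exact: derivable_gmx.
- by move=> a b; exact: derivable_ginv.
Qed.

Lemma Qco_dchris y i j k l : U y ->
  Qco h i j k l y = dchris (ginv h y) (hess3 y) (hess4 y) i j k l.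
Proof.
move=> Uy; set e := ecoord R k.
have dB m : derivable (fun z => ginv h z i m) y e by exact: derivable_ginv.
have dT m : derivable (iter_pd [:: m; j; l] h) y e by exact: derivable_iter_pd.
have gam_near z : U z ->
    gam h i j l z = 2^-1 * \sum_m ginv h z i m * iter_pd [:: m; j; l] h z.
  by move=> Uz; rewrite gam_chris.
rewrite /Qco (eq_pd_on k Uy gam_near) /pd derive_scale; last first.
  by apply: derivable_sum_seq => m; exact: derivableM (dB m) (dT m).
rewrite derive_big_sum => [|m]; last exact: derivableM (dB m) (dT m).
rewrite /dchris; congr (_ * _); apply: eq_bigr => m _.
rewrite derive_mul // derive_ginv //.
change (ginv h y i m * hess4 y k m j l + hess3 y m j l *
  - (\sum_a \sum_b ginv h y i a * hess3 y k a b * ginv h y b m) =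
  ginv h y i m * hess4 y m j l k -
  hess3 y m j l * \sum_a \sum_b ginv h y i a * hess3 y k a b * ginv h y b m).
by rewrite (hess4_12 k) // (hess4_23 m k) // (hess4_34 m j k) // mulrN.
Qed.

Local Notation G y := (fun a b => gco h a b y).

Lemma Qhat_qhat y xi : U y ->
  Qhat h y xi = qhat (ginv h y) (dchris (ginv h y) (hess3 y) (hess4 y)) xi.
Proof.
move=> Uy; apply/matrixP => i k; rewrite [LHS]mxE [RHS]mxE.
do 2 (apply: eq_bigr => ? _); congr (_ * _).
by apply: eq_bigr => m _; rewrite Qco_dchris.
Qed.

Lemma sec_curv_curv_num y X Y : U y -> sec_curv h y X Y =
  curv_num (G y) (ginv h y) (hess3 y) (hess4 y) (entries X) (entries Y) /
  (gdot (G y) (entries X) (entries X) * gdot (G y) (entries Y) (entries Y) -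
   gdot (G y) (entries X) (entries Y) ^+ 2).
Proof.
move=> Uy; congr (_ / _); apply: eq_bigr => a _; apply: eq_bigr => i _.
apply: eq_bigr => j _; apply: eq_bigr => k _; apply: eq_bigr => l _.
congr (_ * _ * _ * _ * _ * _).
rewrite /riemann -(Qco_dchris i l k j Uy) -(Qco_dchris i k l j Uy).
by congr (_ + _); apply: eq_bigr => m _; rewrite !gam_chris.
Qed.

Lemma sec_curv_const_hess c y : U y ->
  (forall xi, xi^T = xi -> xi != 0 -> hess_sec h y xi = c) ->
  forall X Y : V, \rank (col_mx X Y) = 2%N -> sec_curv h y X Y = - (c / 4).
Proof.
move=> Uy hess X Y rk; rewrite sec_curv_curv_num //.
apply: (const_hess_sec_curv (g := G y) (B := ginv h y) (T := hess3 y) (F := hess4 y)) rk.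
- by move=> a b; exact: gco_sym.
- by move=> a b; exact: ginv_sym.
- by move=> a b; exact: gco_ginv.
- by move=> a b d; exact: hess3_12.
- by move=> a b d; exact: hess3_23.
- by move=> a b d e; exact: hess4_12.
- by move=> a b d e; exact: hess4_23.
- by move=> a b d e; exact: hess4_34.
- exact: h_pos_def.
- by move=> xi xi_sym xi0; rewrite -Qhat_qhat //; exact: hess.
Qed.

End AffineChart.

Theorem corollary2 (R : realType) (q : nat) (U : set 'rV[R]_q)
  (h : 'rV[R]_q -> R) (c : R) :
  open U ->
  smooth_on U h ->
  pos_def_on h U ->
  const_hess_sec h U c ->
  const_sec_curv h U (- (c / 4)).
Proof.
move=> U_open h_smooth h_pos_def hess y Uy X Y.
apply: (sec_curv_const_hess U_open h_smooth h_pos_def Uy (hess y Uy)).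
Qed.
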